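(* Let $1<p<\infty$, let $q$ be defined by $\frac1p+\frac1q=1$, and let $n,m\ge 0$ be integers. If $n\equiv m\pmod 2$, then $$\binom{n+m}{\frac{n+m}{2}} \le \Big(\sum_{i=0}^{m}\binom{m}{i}^p\Big)^{1/p}\Big(\sum_{j=0}^{n}\binom{n}{j}^q\Big)^{1/q}.$$ If $n-m\equiv 1\pmod 2$, then $$\frac12\binom{n+m+1}{\frac{n+m+1}{2}} \le \Big(\sum_{i=0}^{m}\binom{m}{i}^p\Big)^{1/p}\Big(\sum_{j=0}^{n}\binom{n}{j}^q\Big)^{1/q}.$$
   Context: Binomial coefficients $\binom{n}{i}$ for integers $0\le i\le n$ have their usual meaning. *)

From Stdlib Require Import Reals Lra Lia.
Open Scope R_scope.

(* l^r norm of the binomial row: (sum_{i=0}^m C(m,i)^r)^(1/r).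
   All binomials C m i (0<=i<=m) are positive, so Rpower is the usual power. *)
Definition binom_norm (r : R) (m : nat) : R :=
  Rpower (sum_f_R0 (fun i => Rpower (C m i) r) m) (/ r).

From Stdlib Require Import Reals Lra Lia.
Open Scope R_scope.

(* Extend the binomial coefficients by zero outside 0 <= k <= N.
   By Vandermonde's identity every coefficient of row n+m is a sum
     C(n+m, m+j) = sum_i C(m,i) C(n,i+j),
   i.e. an inner product of row m with a shifted copy of row n.  Hölder's
   inequality bounds this by the l^p norm of row m times the l^q norm of the
   shifted row n, and shifting can only drop terms, so every C(n+m,k) is at
   most  binom_norm p m * binom_norm q n.  The even case is the instance
   k = (n+m)/2; in the odd case Pascal's rule writes C(n+m+1,(n+m+1)/2) as the
   sum of two coefficients of row n+m, each bounded in the same way. *)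

(* Binomial coefficients as natural numbers, given by Pascal's rule; unlike
   Stdlib's [C], they vanish for k > n. *)
Fixpoint binom (n k : nat) : nat :=
  match n, k with
  | O, O => 1%nat
  | O, S _ => 0%nat
  | S n', O => 1%nat
  | S n', S k' => (binom n' k' + binom n' (S k'))%nat
  end.

Lemma binom_gt n : forall k, (n < k)%nat -> binom n k = 0%nat.
Proof.
  induction n as [|n IHn]; intros [|k] Hk; simpl; try lia.
  rewrite !IHn; lia.
Qed.

Lemma binom_n0 n : binom n 0 = 1%nat.
Proof. destruct n; reflexivity. Qed.

Lemma C_n0 n : C n 0 = 1.
Proof. unfold C. rewrite Nat.sub_0_r. simpl. field. apply INR_fact_neq_0. Qed.

Lemma C_nn n : C n n = 1.
Proof. unfold C. rewrite Nat.sub_diag. simpl. field. apply INR_fact_neq_0. Qed.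

Lemma binom_C n : forall k, (k <= n)%nat -> INR (binom n k) = C n k.
Proof.
  induction n as [|n IHn]; intros [|k] Hk; try lia;
    try (simpl; rewrite C_n0; reflexivity).
  simpl binom. rewrite plus_INR.
  destruct (Nat.eq_dec k n) as [->|Hkn].
  - rewrite (binom_gt n (S n)), IHn, !C_nn by lia. simpl; lra.
  - rewrite !IHn by lia. apply pascal. lia.
Qed.

Lemma vandermonde n m : forall j,
  sum_f_R0 (fun i => INR (binom m i) * INR (binom n (i + j))) m
  = INR (binom (m + n) (m + j)).
Proof.
  induction m as [|m IHm]; intros j; [simpl; ring|].
  (* Split C(m+1,i) by Pascal's rule; the two resulting sums are the
     induction hypothesis at shifts j+1 and j. *)
  assert (Hsplit : forall f : nat -> R,
             sum_f_R0 f (S m) = f O + sum_f_R0 (fun i => f (S i)) m)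
    by (intro f; rewrite decomp_sum by lia; reflexivity).
  assert (Hlow := Hsplit (fun i => INR (binom m i) * INR (binom n (i + j)))).
  simpl in Hlow. rewrite binom_gt, IHm, binom_n0 in Hlow by lia.
  rewrite Hsplit, binom_n0.
  rewrite (sum_eq _ (fun i => INR (binom m i) * INR (binom n (i + S j))
                      + INR (binom m (S i)) * INR (binom n (S i + j)))).
  2:{ intros i _. simpl binom. rewrite plus_INR, Nat.add_succ_r. simpl. ring. }
  rewrite sum_plus, IHm.
  replace (S m + n)%nat with (S (m + n)) by lia.
  replace (S m + j)%nat with (S (m + j)) by lia.
  rewrite Nat.add_succ_r. simpl binom. rewrite plus_INR. simpl in *. lra.
Qed.

(* The power x^r for x > 0, extended by 0 for x <= 0 (whereas [Rpower 0 r = 1]);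
   this lets Hölder's inequality handle vanishing terms. *)
Definition rpow0 (x r : R) : R := if Rlt_dec 0 x then Rpower x r else 0.

Lemma rpow0_ge0 x r : 0 <= rpow0 x r.
Proof. unfold rpow0. destruct Rlt_dec; [left; apply exp_pos | lra]. Qed.

Lemma rpow0_le_Rpower x r : rpow0 x r <= Rpower x r.
Proof. unfold rpow0. destruct Rlt_dec; [lra | left; apply exp_pos]. Qed.

Lemma rpow0_div a A r : 0 < A -> rpow0 (a / A) r = rpow0 a r / Rpower A r.
Proof.
  intros HA. assert (HA' : 0 < / A) by (apply Rinv_0_lt_compat; lra).
  assert (Hsign : 0 < a / A <-> 0 < a).
  { unfold Rdiv. split; intro H; [|nra].
    destruct (Rle_or_lt a 0); [nra | assumption]. }
  unfold rpow0. destruct (Rlt_dec 0 (a / A)) as [H1|H1], (Rlt_dec 0 a) as [H2|H2];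
    try tauto; [|unfold Rdiv; ring].
  unfold Rdiv, Rpower. rewrite ln_mult, ln_Rinv, Rmult_plus_distr_l, exp_plus by lra.
  rewrite <- exp_Ropp. do 2 f_equal. ring.
Qed.

(* Convexity of exp, via the tangent-line bound  exp u >= 1 + u. *)
Lemma exp_convex t s x y : 0 <= t -> 0 <= s -> t + s = 1 ->
  exp (t * x + s * y) <= t * exp x + s * exp y.
Proof.
  intros Ht Hs Hts. set (z := t * x + s * y).
  assert (Ex : exp x = exp z * exp (x - z)) by (rewrite <- exp_plus; f_equal; ring).
  assert (Ey : exp y = exp z * exp (y - z)) by (rewrite <- exp_plus; f_equal; ring).
  pose proof (exp_ineq1_le (x - z)). pose proof (exp_ineq1_le (y - z)).
  pose proof (exp_pos z).
  assert (Hmean : t * (x - z) + s * (y - z) = 0)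
    by (unfold z; replace s with (1 - t) by lra; ring).
  rewrite Ex, Ey.
  assert (t * (1 + (x - z)) <= t * exp (x - z)) by (apply Rmult_le_compat_l; lra).
  assert (s * (1 + (y - z)) <= s * exp (y - z)) by (apply Rmult_le_compat_l; lra).
  nra.
Qed.

Lemma young p q a b : 0 < p -> 0 < q -> / p + / q = 1 -> 0 <= a -> 0 <= b ->
  a * b <= rpow0 a p / p + rpow0 b q / q.
Proof.
  intros Hp Hq Hpq Ha Hb.
  assert (Hterms : 0 <= rpow0 a p / p /\ 0 <= rpow0 b q / q).
  { split; apply Rle_mult_inv_pos; auto using rpow0_ge0. }
  destruct (Req_dec a 0) as [->|Ha0]; [nra|].
  destruct (Req_dec b 0) as [->|Hb0]; [nra|].
  unfold rpow0. destruct (Rlt_dec 0 a); [|lra]. destruct (Rlt_dec 0 b); [|lra].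
  unfold Rpower.
  replace (a * b) with (exp (/p * (p * ln a) + /q * (q * ln b))).
  - unfold Rdiv. rewrite (Rmult_comm (exp (p * ln a))), (Rmult_comm (exp (q * ln b))).
    apply exp_convex; auto; left; apply Rinv_0_lt_compat; lra.
  - replace (/p * (p * ln a) + /q * (q * ln b)) with (ln a + ln b) by (field; lra).
    rewrite exp_plus, !exp_ln; auto.
Qed.

Lemma holder p q (a b : nat -> R) N A B :
  0 < p -> 0 < q -> / p + / q = 1 -> 0 < A -> 0 < B ->
  (forall i, 0 <= a i) -> (forall i, 0 <= b i) ->
  sum_f_R0 (fun i => rpow0 (a i) p) N <= Rpower A p ->
  sum_f_R0 (fun i => rpow0 (b i) q) N <= Rpower B q ->
  sum_f_R0 (fun i => a i * b i) N <= A * B.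
Proof.
  intros Hp Hq Hpq HA HB Ha Hb Sa Sb.
  assert (PA : 0 < Rpower A p) by apply exp_pos.
  assert (PB : 0 < Rpower B q) by apply exp_pos.
  set (cA := A * B / (p * Rpower A p)). set (cB := A * B / (q * Rpower B q)).
  assert (HcA : 0 < cA) by (apply Rdiv_lt_0_compat; nra).
  assert (HcB : 0 < cB) by (apply Rdiv_lt_0_compat; nra).
  assert (Hterm : forall i,
             a i * b i <= rpow0 (a i) p * cA + rpow0 (b i) q * cB).
  { intro i.
    assert (Y := young p q (a i / A) (b i / B) Hp Hq Hpq).
    rewrite !rpow0_div in Y by assumption.
    assert (Hnorm : 0 <= a i / A /\ 0 <= b i / B).
    { split; apply Rle_mult_inv_pos; auto. }
    replace (a i * b i) with ((A * B) * (a i / A * (b i / B))) by (field; lra).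
    replace (rpow0 (a i) p * cA + rpow0 (b i) q * cB) with
      ((A * B) * (rpow0 (a i) p / Rpower A p / p + rpow0 (b i) q / Rpower B q / q))
      by (unfold cA, cB; field; lra).
    apply Rmult_le_compat_l; [nra | apply Y; tauto]. }
  apply Rle_trans with (sum_f_R0 (fun i => rpow0 (a i) p * cA + rpow0 (b i) q * cB) N).
  { apply sum_Rle. intros i _. apply Hterm. }
  rewrite sum_plus, <- !scal_sum.
  apply Rle_trans with (cA * Rpower A p + cB * Rpower B q).
  { apply Rplus_le_compat; apply Rmult_le_compat_l; lra. }
  right. unfold cA, cB.
  transitivity (A * B * (/p + /q)); [field; lra | rewrite Hpq; ring].
Qed.

Lemma sum_le_support (g : nat -> R) L M :
  (forall l, 0 <= g l) -> (forall l, (M < l)%nat -> g l = 0) ->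
  sum_f_R0 g L <= sum_f_R0 g M.
Proof.
  intros Hg Hz.
  assert (Hmono : forall a b, (a <= b)%nat -> sum_f_R0 g a <= sum_f_R0 g b).
  { intros a b Hab. induction Hab as [|b Hab IH]; [lra|]. simpl. pose proof (Hg (S b)). lra. }
  induction L as [|L IHL]; [apply Hmono; lia|].
  destruct (Nat.le_gt_cases (S L) M); [apply Hmono; assumption|].
  simpl. rewrite Hz by lia. lra.
Qed.

(* Shifting the index of a nonnegative sum by j only drops initial terms. *)
Lemma sum_shift_le (g : nat -> R) j N :
  (forall l, 0 <= g l) -> sum_f_R0 (fun i => g (i + j)%nat) N <= sum_f_R0 g (N + j).
Proof.
  intros Hg. induction N as [|N IHN].
  - simpl. destruct j as [|j]; simpl; [lra|].
    assert (0 <= sum_f_R0 g j) by (apply cond_pos_sum; auto). lra.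
  - simpl. replace (S (N + j)) with (S N + j)%nat by lia. lra.
Qed.

Lemma shifted_row_power_sum r N j M :
  sum_f_R0 (fun i => rpow0 (INR (binom N (i + j))) r) M <=
  sum_f_R0 (fun l => Rpower (C N l) r) N.
Proof.
  set (g := fun l => rpow0 (INR (binom N l)) r).
  assert (Hg : forall l, 0 <= g l) by (intro; apply rpow0_ge0).
  apply Rle_trans with (sum_f_R0 g (M + j)); [apply (sum_shift_le g j M Hg)|].
  apply Rle_trans with (sum_f_R0 g N).
  { apply sum_le_support; auto. intros l Hl. unfold g. rewrite binom_gt by lia.
    unfold rpow0. simpl. destruct Rlt_dec; lra. }
  apply sum_Rle. intros l Hl. unfold g. rewrite binom_C by lia. apply rpow0_le_Rpower.
Qed.

Lemma binom_norm_pos r N : 0 < binom_norm r N.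
Proof. apply exp_pos. Qed.

Lemma Rpower_binom_norm r N : 0 < r ->
  Rpower (binom_norm r N) r = sum_f_R0 (fun l => Rpower (C N l) r) N.
Proof.
  intros Hr. unfold binom_norm. rewrite Rpower_mult, Rinv_l by lra.
  apply Rpower_1, tech1. intros; apply exp_pos.
Qed.

Lemma vandermonde_sum_le p q M N j : 0 < p -> 0 < q -> / p + / q = 1 ->
  sum_f_R0 (fun i => INR (binom M i) * INR (binom N (i + j))) M
  <= binom_norm p M * binom_norm q N.
Proof.
  intros Hp Hq Hpq.
  rewrite (sum_eq _ (fun i => INR (binom M (i + 0)) * INR (binom N (i + j))))
    by (intros i _; rewrite Nat.add_0_r; reflexivity).
  apply (holder p q); auto using binom_norm_pos, pos_INR;
    rewrite Rpower_binom_norm by assumption; apply shifted_row_power_sum.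
Qed.

Lemma conjugate_exponent_pos p q : 1 < p -> / p + / q = 1 -> 0 < q.
Proof.
  intros Hp Hpq.
  assert (/ p < 1) by (rewrite <- Rinv_1; apply Rinv_lt_contravar; lra).
  destruct (Rtotal_order q 0) as [Hneg|[Hzero|Hpos]]; auto.
  - pose proof (Rinv_lt_0_compat q Hneg). lra.
  - subst. rewrite Rinv_0 in Hpq. lra.
Qed.

Lemma binom_coeff_le p q n m k : 0 < p -> 0 < q -> / p + / q = 1 ->
  (k <= n + m)%nat -> C (n + m) k <= binom_norm p m * binom_norm q n.
Proof.
  intros Hp Hq Hpq Hk.
  destruct (Nat.le_gt_cases m k) as [Hmk|Hmk].
  - (* k = m + j:  pair row m with row n shifted by j. *)
    replace (C (n + m) k) with (INR (binom (m + n) (m + (k - m)))).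
    + rewrite <- vandermonde. apply vandermonde_sum_le; assumption.
    + rewrite binom_C by lia. f_equal; lia.
  - (* k < m: by symmetry C(n+m,k) = C(n+m, n + (m-k)); pair row n with
       row m shifted by m-k, exchanging the roles of p and q. *)
    replace (C (n + m) k) with (INR (binom (n + m) (n + (m - k)))).
    + rewrite <- vandermonde, Rmult_comm. apply vandermonde_sum_le; lra.
    + rewrite binom_C, (pascal_step1 (n + m) k) by lia. f_equal; lia.
Qed.

Theorem mainTheorem7 (p q : R) (n m : nat) :
  1 < p -> / p + / q = 1 ->
  (Nat.even (n + m) = true ->
     C (n + m) ((n + m) / 2) <= binom_norm p m * binom_norm q n) /\
  (Nat.even (n + m) = false ->
     / 2 * C (n + m + 1) ((n + m + 1) / 2) <= binom_norm p m * binom_norm q n).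
Proof.
  intros Hp Hpq.
  assert (Hq := conjugate_exponent_pos p q Hp Hpq).
  assert (Hbound : forall k, (k <= n + m)%nat ->
                   C (n + m) k <= binom_norm p m * binom_norm q n)
    by (intros k Hk; apply binom_coeff_le; auto; lra).
  split.
  - intros _. apply Hbound, Nat.div_le_upper_bound; lia.
  - (* n+m = 2t+1: Pascal splits the middle coefficient of row n+m+1 into
       C(n+m,t) + C(n+m,t+1). *)
    intros Hodd.
    destruct (Nat.Even_or_Odd (n + m)) as [Heven|[t Ht]].
    { apply Nat.even_spec in Heven. congruence. }
    replace ((n + m + 1) / 2)%nat with (S t)
      by (rewrite Ht, <- (Nat.div_mul (S t) 2) by lia; f_equal; lia).
    replace (n + m + 1)%nat with (S (n + m)) by lia.
    rewrite <- pascal by lia.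
    pose proof (Hbound t ltac:(lia)). pose proof (Hbound (S t) ltac:(lia)).
    lra.
Qed.
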